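(* For every metric space $X$, either $h_\infty(X)=0$ or $h_\infty(X)=\infty$. Consequently the coarse entropy of any isometric embedding $f\colon X\to X$ is either $0$ or $\infty$.
   Context: For a map $f\colon X\to X$ on a metric space $(X,d)$, $\delta>0$, $n\in\mathbb N$, $x_0\in X$: a $\delta$-pseudoorbit of $f$ of length $n$ from $x_0$ is $(x_0,\dots,x_n)$ with $d(f(x_i),x_{i+1})\le\delta$ for all $i<n$; $P(f,n,\delta,x_0)$ is the set of these with distance $\max_i d(x_i,y_i)$; $s(f,n,R,\delta,x_0)$ is the supremum of cardinalities of $R$-separated subsets (distinct elements at distance $\ge R$) of $P(f,n,\delta,x_0)$; $h_\infty(f)=\lim_{\delta\to\infty}\lim_{R\to\infty}\limsup_{n\to\infty}\frac1n\log s(f,n,R,\delta,x_0)\in[0,\infty]$, independent of $x_0$. The coarse entropy of the space is $h_\infty(X)=h_\infty(\mathrm{id}_X)$, which equals $h_\infty(f)$ for every isometric embedding $f\colon X\to X$. *)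

From HB Require Import structures.
From mathcomp Require Import all_boot all_order all_algebra.
From mathcomp Require Import all_classical all_reals all_analysis.
Set Implicit Arguments. Unset Strict Implicit. Unset Printing Implicit Defensive.
Import Order.TTheory GRing.Theory Num.Theory.
Local Open Scope classical_set_scope.
Local Open Scope ring_scope.

Definition is_metric (R : realType) (X : Type) (d : X -> X -> R) : Prop :=
  (forall x y, 0 <= d x y) /\
  (forall x y, d x y = 0 <-> x = y) /\
  (forall x y, d x y = d y x) /\
  (forall x y z, d x z <= d x y + d y z).

(* (x_0,...,x_n) is represented by a sequence x : nat -> X, of which only
   the entries x 0, ..., x n matter. *)
Definition pseudo_orbit (R : realType) (X : Type) (d : X -> X -> R)
  (f : X -> X) (n : nat) (delta : R) (x0 : X) (x : nat -> X) : Prop :=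
  x 0%N = x0 /\ forall i, (i < n)%N -> d (f (x i)) (x i.+1) <= delta.

Definition orbit_dist (R : realType) (X : Type) (d : X -> X -> R) (n : nat)
  (x y : nat -> X) : R :=
  \big[Num.max/0]_(i < n.+1) d (x i) (y i).

Definition same_tuple (X : Type) (n : nat) (x y : nat -> X) : Prop :=
  forall i, (i <= n)%N -> x i = y i.

(* k is the cardinality of some R-separated subset of P(f,n,delta,x0):
   there are k pairwise distinct pseudo-orbits at mutual distance >= Rsep. *)
Definition has_separated_set (R : realType) (X : Type) (d : X -> X -> R)
  (f : X -> X) (n : nat) (Rsep delta : R) (x0 : X) (k : nat) : Prop :=
  exists orb : nat -> nat -> X,
    (forall j, (j < k)%N -> pseudo_orbit d f n delta x0 (orb j)) /\
    (forall j j', (j < k)%N -> (j' < k)%N -> j <> j' ->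
        ~ same_tuple n (orb j) (orb j') /\ Rsep <= orbit_dist d n (orb j) (orb j')).

Definition s_sep (R : realType) (X : Type) (d : X -> X -> R)
  (f : X -> X) (n : nat) (Rsep delta : R) (x0 : X) : \bar R :=
  ereal_sup [set ((k%:R : R)%:E) | k in [set k | has_separated_set d f n Rsep delta x0 k]].

Definition growth (R : realType) (X : Type) (d : X -> X -> R)
  (f : X -> X) (Rsep delta : R) (x0 : X) : \bar R :=
  limn_esup (fun n : nat => ((n%:R : R)^-1)%:E * lne (s_sep d f n Rsep delta x0))%E.

Definition coarse_entropy (R : realType) (X : Type) (d : X -> X -> R)
  (f : X -> X) (x0 : X) : \bar R :=
  lim ((fun delta : R => lim ((fun Rsep : R => growth d f Rsep delta x0) @ +oo)) @ +oo).

Definition coarse_entropy_space (R : realType) (X : Type) (d : X -> X -> R)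
  (x0 : X) : \bar R := coarse_entropy d id x0.

Definition isometric_embedding (R : realType) (X : Type) (d : X -> X -> R)
  (f : X -> X) : Prop := forall x y, d (f x) (f y) = d x y.

(* Subsampling a [delta]-pseudo-orbit of [id] of length [m] at every [k]-th point gives a
   [k delta]-pseudo-orbit of length about [m/k] with the same separation (up to an additive
   [2 k delta]), so the exponential growth rate at step [k delta] is at least [k/2] times the
   one at step [delta]. Hence if the rate is positive for one [delta], its supremum over
   [delta] is infinite. For an isometric embedding [f], a pseudo-orbit of [f] is the image
   of a pseudo-orbit of [id] under the iterates of [f], and conversely a pseudo-orbit of [f]
   of length [n], unwound by these iterates and preceded by the orbit of [x0], is a
   pseudo-orbit of [id] of length [2n]; so [h(id) <= h(f) <= 2 h(id)]. *)
From HB Require Import structures.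
From mathcomp Require Import all_boot all_order all_algebra.
From mathcomp Require Import all_classical all_reals all_analysis.
From mathcomp Require Import zify ring lra.
Import Order.TTheory GRing.Theory Num.Theory.

Set Implicit Arguments.
Unset Strict Implicit.
Unset Printing Implicit Defensive.
Local Open Scope classical_set_scope.
Local Open Scope ring_scope.

Section PseudoOrbits.
Variables (R : realType) (X : Type) (d : X -> X -> R).
Hypothesis hd : is_metric d.

Lemma metric_xx x : d x x = 0.
Proof. by case: hd => _ [/(_ x x) [_ ->]]. Qed.

Lemma metric_eq0 x y : d x y = 0 -> x = y.
Proof. by case: hd => _ [/(_ x y) []]. Qed.

Lemma metric_sym x y : d x y = d y x.
Proof. by case: hd => _ [_ []]. Qed.

Lemma metric_triangle x y z : d x z <= d x y + d y z.
Proof. by case: hd => _ [_ [_]]. Qed.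

Lemma le_orbit_dist n x y i : (i <= n)%N -> d (x i) (y i) <= orbit_dist d n x y.
Proof. by move=> hi; apply/bigmax_geP; right; exists (Ordinal (hi : (i < n.+1)%N)). Qed.

Lemma orbit_dist_ge_ex n x y r : 0 < r -> r <= orbit_dist d n x y ->
  exists2 i, (i <= n)%N & r <= d (x i) (y i).
Proof.
move=> r0 /bigmax_geP [|[i _ hi]]; first by rewrite leNgt r0.
by exists (val i); first by rewrite -ltnS ltn_ord.
Qed.

Lemma orbit_dist_gt0_not_same n x y r : 0 < r -> r <= orbit_dist d n x y ->
  ~ same_tuple n x y.
Proof.
move=> r0 /(orbit_dist_ge_ex r0) [i hi hr] hxy.
by move: hr; rewrite hxy // metric_xx leNgt r0.
Qed.

Lemma pseudo_orbit_id_dist n delta x0 x a b : pseudo_orbit d id n delta x0 x ->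
  (a <= b <= n)%N -> d (x a) (x b) <= (b - a)%:R * delta.
Proof.
case=> _ hx /andP[]; elim: b => [|b IH].
  by rewrite leqn0 => /eqP-> _; rewrite metric_xx mul0r.
rewrite leq_eqVlt => /orP[/eqP-> _|hab hbn]; first by rewrite subnn metric_xx mul0r.
apply: le_trans (metric_triangle _ (x b) _) _.
by rewrite subSn // mulrSr mulrDl mul1r lerD ?IH ?(ltnW hbn) ?hx.
Qed.

Lemma has_separated_set_mono f n Rs Rs' delta delta' x0 K :
  Rs' <= Rs -> delta <= delta' ->
  has_separated_set d f n Rs delta x0 K -> has_separated_set d f n Rs' delta' x0 K.
Proof.
move=> hR hde [orb [hpo hsep]]; exists orb; split.
  move=> j /hpo [h0 hx]; split=> // i /hx hi; exact: le_trans hi hde.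
by move=> j j' hj hj' hjj; have [? /(le_trans hR)] := hsep j j' hj hj' hjj.
Qed.

(* Keep every [k]-th point; two orbits far apart at time [i] are still far apart at
   time [k * (i %/ k)], since each moved by at most [k delta] in between. *)
Lemma has_separated_set_subsample (k m : nat) (delta Rs : R) x0 K :
  (0 < k)%N -> 0 <= delta -> 0 < Rs ->
  has_separated_set d id m (Rs + 2 * k%:R * delta) delta x0 K ->
  has_separated_set d id (m %/ k).+1 Rs (k%:R * delta) x0 K.
Proof.
move=> k0 de0 Rs0 [orb [hpo hsep]].
exists (fun j i => orb j (minn (k * i) m)); split.
  move=> j hj; split=> [|i _ /=]; first by rewrite muln0 min0n; case: (hpo j hj).
  have hab : (minn (k * i) m <= minn (k * i.+1) m <= m)%N by apply/andP; split; lia.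
  apply: le_trans (pseudo_orbit_id_dist (hpo j hj) hab) _.
  by apply: ler_wpM2r => //; rewrite ler_nat; lia.
move=> j j' hj hj' hjj; have [_ hs] := hsep j j' hj hj' hjj.
have [|i hi hdi] := orbit_dist_ge_ex _ hs.
  by rewrite ltr_wpDr // !mulr_ge0.
set q := (i %/ k)%N.
have hkq : (k * q <= i <= m)%N by rewrite mulnC leq_divM hi.
have hq : minn (k * q) m = (k * q)%N by apply/minn_idPl; lia.
have hik : (i - k * q)%:R * delta <= k%:R * delta.
  apply: ler_wpM2r => //; rewrite ler_nat leq_subLR {1}(divn_eq i k) mulnC leq_add2l.
  by rewrite ltnW // ltn_pmod.
have far : Rs <= d (orb j (minn (k * q) m)) (orb j' (minn (k * q) m)).
  have := pseudo_orbit_id_dist (hpo j hj) hkq.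
  have := pseudo_orbit_id_dist (hpo j' hj') hkq.
  have := metric_triangle (orb j i) (orb j (k * q)) (orb j' i).
  have := metric_triangle (orb j (k * q)) (orb j' (k * q)) (orb j' i).
  rewrite hq (metric_sym (orb j i) (orb j _)); lra.
have hqn : (q <= (m %/ k).+1)%N by rewrite leqW // leq_div2r.
have {}far := le_trans far
  (le_orbit_dist (fun i => orb j (minn (k * i) m)) (fun i => orb j' (minn (k * i) m)) hqn).
by split=> //; apply: orbit_dist_gt0_not_same far.
Qed.

Section IsometricEmbedding.
Variable f : X -> X.
Hypothesis hf : isometric_embedding d f.

Lemma isometric_embedding_iter i x y : d (iter i f x) (iter i f y) = d x y.
Proof. by elim: i => //= i IH; rewrite hf. Qed.

Lemma has_separated_set_id_iso n Rs delta x0 K :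
  has_separated_set d id n Rs delta x0 K -> has_separated_set d f n Rs delta x0 K.
Proof.
move=> [orb [hpo hsep]]; exists (fun j i => iter i f (orb j i)); split.
  move=> j /hpo [h0 hx]; split=> // i hi /=.
  by rewrite -/(iter i.+1 f _) isometric_embedding_iter; exact: hx.
move=> j j' hj hj' hjj; have [hns hs] := hsep j j' hj hj' hjj; split.
  move=> hsame; apply: hns => i hi; apply: metric_eq0.
  by rewrite -(isometric_embedding_iter i) hsame // metric_xx.
by rewrite /orbit_dist; under eq_bigr do rewrite isometric_embedding_iter.
Qed.

(* The [id]-pseudo-orbit follows [x0, f x0, ..., f^(n-1) x0] and then
   [f^n (y 0), f^(n-1) (y 1), ..., y n] for the [f]-pseudo-orbit [y]. *)
Lemma has_separated_set_iso_id n Rs delta x0 K : 0 < Rs -> d x0 (f x0) <= delta ->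
  has_separated_set d f n Rs delta x0 K -> has_separated_set d id (n + n) Rs delta x0 K.
Proof.
move=> Rs0 hx0 [orb [hpo hsep]].
pose o j i := if (i < n)%N then iter i f x0 else iter (n + n - i) f (orb j (i - n)%N).
have horbit i : d (iter i f x0) (iter i.+1 f x0) <= delta.
  by rewrite iterSr isometric_embedding_iter.
exists o; split.
  move=> j /hpo [h0 hx]; split=> [|i hi /=]; rewrite /o.
    by case: ltnP => // hn0; have -> : n = 0%N by lia.
  case: (ltnP i.+1 n) => h1; first by rewrite (ltnW h1) horbit.
  case: (ltnP i n) => h2.
    have -> : (n + n - i.+1 = i.+1)%N by lia.
    have -> : (i.+1 - n = 0)%N by lia.
    by rewrite h0 horbit.
  have -> : (n + n - i = (n + n - i.+1).+1)%N by lia.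
  have -> : (i.+1 - n = (i - n).+1)%N by lia.
  by rewrite iterSr isometric_embedding_iter hx //; lia.
move=> j j' hj hj' hjj; have [_ hs] := hsep j j' hj hj' hjj.
have [i hi hdi] := orbit_dist_ge_ex Rs0 hs.
have hin : (n + i <= n + n)%N by rewrite leq_add2l.
have far : Rs <= d (o j (n + i)%N) (o j' (n + i)%N).
  by rewrite /o ltnNge leq_addr /= isometric_embedding_iter addKn.
have {}far := le_trans far (le_orbit_dist (o j) (o j') hin).
by split=> //; apply: orbit_dist_gt0_not_same far.
Qed.

End IsometricEmbedding.
End PseudoOrbits.

Section LimSup.
Variable R : realType.
Local Open Scope ereal_scope.

Lemma limn_esup_le_reindex (u v : nat -> \bar R) (c : R) (g : nat -> nat) : (0 < c)%R ->
  (forall N, exists M, forall m, (M <= m)%N -> (N <= g m)%N /\ c%:E * v m <= u (g m)) ->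
  c%:E * limn_esup v <= limn_esup u.
Proof.
move=> c0 H; rewrite /limn_esup !limf_esupE -ereal_inf_pZl //.
apply: le_ereal_inf_tmp => _ [W [N _ hN] <-].
have [M hM] := H N.
apply: ge_ereal_inf; exists (c%:E * ereal_sup (v @` [set m | (M <= m)%N])).
  exists (ereal_sup (v @` [set m | (M <= m)%N])) => //.
  by exists [set m | (M <= m)%N] => //; exists M.
rewrite -ereal_sup_pZl //; apply: ge_ereal_sup => _ [_ [m hm <-] <-].
have [hNm /le_trans] := hM m hm; apply; apply: ereal_sup_ubound.
by exists (g m) => //; apply: hN.
Qed.

Lemma lne_le (x y : \bar R) : 0 <= x -> x <= y -> lne x <= lne y.
Proof.
by move=> x0 xy; rewrite lee_lne // !in_itv /= ?leey ?x0 // (le_trans x0 xy).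
Qed.

End LimSup.

Section Growth.
Variables (R : realType) (X : Type) (d : X -> X -> R).
Hypothesis hd : is_metric d.
Variable x0 : X.
Local Open Scope ereal_scope.

Lemma s_sep_ge0 f n Rs delta : 0 <= s_sep d f n Rs delta x0.
Proof.
apply: le_ereal_sup_tmp; exists 0%:E => //; exists 0%N => //.
by exists (fun _ _ => x0); split.
Qed.

Lemma s_sep_ge1 f n Rs delta : (0 <= delta)%R -> 1 <= s_sep d f n Rs delta x0.
Proof.
move=> de0; apply: le_ereal_sup_tmp; exists 1%:E => //; exists 1%N => //.
exists (fun _ i => iter i f x0); split; last by case=> [|?] [|?].
by move=> j _; split=> // i _ /=; rewrite metric_xx.
Qed.

Lemma le_s_sep f g n n' Rs Rs' delta delta' :
  (forall K, has_separated_set d f n Rs delta x0 K ->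
             has_separated_set d g n' Rs' delta' x0 K) ->
  s_sep d f n Rs delta x0 <= s_sep d g n' Rs' delta' x0.
Proof. by move=> H; apply: ereal_sup_le => _ [K hK <-]; exists K => //; apply: H. Qed.

Lemma le_lne_s_sep f f' n n' Rs Rs' delta delta' (c : R) : (0 <= c)%R ->
  (forall K, has_separated_set d f n Rs delta x0 K ->
             has_separated_set d f' n' Rs' delta' x0 K) ->
  c%:E * lne (s_sep d f n Rs delta x0) <= c%:E * lne (s_sep d f' n' Rs' delta' x0).
Proof.
move=> c0 hK; apply: lee_wpmul2l; first by rewrite lee_fin.
by apply: lne_le; [apply: s_sep_ge0 | apply: le_s_sep].
Qed.

Lemma le_growth_of_separated f f' Rs Rs' delta delta' :
  (forall n K, has_separated_set d f n Rs delta x0 K ->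
               has_separated_set d f' n Rs' delta' x0 K) ->
  growth d f Rs delta x0 <= growth d f' Rs' delta' x0.
Proof.
move=> hsep; rewrite -[growth d f Rs delta x0]mul1e.
apply: (limn_esup_le_reindex (g := id)) => // N; exists N => m hm; split=> //.
by rewrite mul1e; apply: le_lne_s_sep (hsep m); rewrite invr_ge0.
Qed.

Lemma le_growth f Rs Rs' delta delta' : (Rs' <= Rs)%R -> (delta <= delta')%R ->
  growth d f Rs delta x0 <= growth d f Rs' delta' x0.
Proof.
by move=> hR hde; apply: le_growth_of_separated => n K; apply: has_separated_set_mono.
Qed.

Lemma le_growth_reindex f f' Rs Rs' delta delta' (c : R) (g : nat -> nat) :
  (0 < c)%R -> (0 <= delta)%R ->
  (forall N, exists M, forall m, (M <= m)%N -> (N <= g m)%N /\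
     (c / m%:R <= (g m)%:R^-1)%R /\
     forall K, has_separated_set d f m Rs delta x0 K ->
               has_separated_set d f' (g m) Rs' delta' x0 K) ->
  c%:E * growth d f Rs delta x0 <= growth d f' Rs' delta' x0.
Proof.
move=> c0 de0 H; apply: (limn_esup_le_reindex (g := g)) => // N.
have [M hM] := H N; exists M => m /hM [hNg [hc hsep]]; split=> //.
rewrite muleA -EFinM.
apply: le_trans (_ : ((g m)%:R^-1)%:E * lne (s_sep d f m Rs delta x0) <= _).
  by apply: lee_wpmul2r; rewrite ?lne_ge0 ?s_sep_ge1 ?lee_fin.
by apply: le_lne_s_sep; rewrite ?invr_ge0.
Qed.

Lemma growth_ge0 f Rs delta : (0 <= delta)%R -> 0 <= growth d f Rs delta x0.
Proof.
move=> de0; apply: limf_esup_ge0 => [[N _ /(_ N (leqnn N))] //|n /=].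
by rewrite mule_ge0 ?lee_fin ?invr_ge0 // lne_ge0 s_sep_ge1.
Qed.

Definition growth_inf f delta := ereal_inf (range (fun Rs => growth d f Rs delta x0)).

Lemma growth_inf_le f Rs delta : growth_inf f delta <= growth d f Rs delta x0.
Proof. by apply: ereal_inf_lbound; exists Rs. Qed.

Lemma growth_inf_ge0 f delta : (0 <= delta)%R -> 0 <= growth_inf f delta.
Proof. by move=> de0; apply: le_ereal_inf_tmp => _ [Rs _ <-]; apply: growth_ge0. Qed.

Lemma growth_inf_nondecreasing f : {homo growth_inf f : a b / (a <= b)%R >-> a <= b}.
Proof.
move=> a b ab; apply: le_ereal_inf_tmp => _ [Rs _ <-].
exact: le_trans (growth_inf_le f Rs a) (le_growth _ _ ab).
Qed.

Lemma coarse_entropyE f : coarse_entropy d f x0 = ereal_sup (range (growth_inf f)).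
Proof.
rewrite /coarse_entropy.
have -> : (fun delta => lim ((fun Rs => growth d f Rs delta x0) @ +oo%R)) = growth_inf f.
  apply: funext => delta; apply: cvg_lim => //.
  by apply: nonincreasing_cvge => a b ab; apply: le_growth.
by apply: cvg_lim => //; apply/nondecreasing_cvge/growth_inf_nondecreasing.
Qed.

Lemma coarse_entropy_ge0 f : 0 <= coarse_entropy d f x0.
Proof.
rewrite coarse_entropyE; apply: le_ereal_sup_tmp.
by exists (growth_inf f 0%R); [exists 0%R | apply: growth_inf_ge0].
Qed.

End Growth.

Lemma ereal_nat_multiples_pinfty (R : realType) (a h : \bar R) : (0 < a)%E ->
  (forall k : nat, (k%:R%:E * a <= h)%E) -> h = +oo%E.
Proof.
case: a => [r||] ha hk; last by rewrite ltNge leNye in ha.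
- have r0 : 0 < r by rewrite -lte_fin.
  case: h hk => [t||] hk; [exfalso | by [] | by move: (hk 0%N); rewrite mul0e leeNy_eq].
  have := hk (Num.truncn (t / r)).+1; rewrite -EFinM lee_fin.
  by rewrite -ler_pdivlMr // leNgt truncnS_gt.
- by have := hk 1%N; rewrite mulry gtr0_sg ?ltr01 // mul1e leye_eq => /eqP.
Qed.

Section Dichotomy.
Variables (R : realType) (X : Type) (d : X -> X -> R).
Hypothesis hd : is_metric d.
Variable x0 : X.
Local Open Scope ereal_scope.

Lemma le_growth_inf (a : \bar R) f delta :
  (forall Rs, (0 < Rs)%R -> a <= growth d f Rs delta x0) -> a <= growth_inf d x0 f delta.
Proof.
move=> ha; apply: le_ereal_inf_tmp => _ [Rs _ <-].
have Rs1 : (0 < Num.max Rs 1)%R by rewrite lt_max ltr01 orbT.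
by apply: le_trans (ha _ Rs1) (le_growth _ _ _ _ _); rewrite ?le_max ?lexx.
Qed.

Lemma subsample_coef (k m : nat) : (0 < k)%N -> (k <= m)%N ->
  (k%:R / 2 / m%:R <= ((m %/ k).+1)%:R^-1 :> R)%R.
Proof.
move=> k0 km; have m0 : (0 < m%:R :> R)%R by rewrite ltr0n; lia.
rewrite ler_pdivrMr // ler_pdivlMl ?ltr0n // mulrA ler_pdivrMr // -!natrM ler_nat.
by have := leq_divM m k; rewrite mulnS; lia.
Qed.

Lemma growth_id_subsample (k : nat) (delta Rs : R) : (0 < k)%N -> (0 <= delta)%R ->
  (0 < Rs)%R -> (k%:R / 2)%:E * growth d id (Rs + 2 * k%:R * delta) delta x0
    <= growth d id Rs (k%:R * delta) x0.
Proof.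
move=> k0 de0 Rs0.
apply: (le_growth_reindex _ (g := fun m => (m %/ k).+1)) => //.
  by rewrite divr_gt0 ?ltr0n.
move=> N; exists (k * N + k)%N => m hm; split.
  suff : (N <= m %/ k)%N by lia.
  by rewrite leq_divRL //; lia.
by split=> [|K]; [apply: subsample_coef; lia | apply: has_separated_set_subsample].
Qed.

Lemma growth_inf_id_scale (k : nat) (delta : R) : (0 < k)%N -> (0 <= delta)%R ->
  (k%:R / 2)%:E * growth_inf d x0 id delta <= growth_inf d x0 id (k%:R * delta).
Proof.
move=> k0 de0; apply: le_growth_inf => Rs Rs0.
apply: le_trans (growth_id_subsample k0 de0 Rs0).
by apply: lee_wpmul2l; [rewrite lee_fin divr_ge0 | apply: growth_inf_le].
Qed.

Lemma coarse_entropy_id_dichotomy :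
  coarse_entropy d id x0 = 0 \/ coarse_entropy d id x0 = +oo.
Proof.
have [h0|hpos] := leP (coarse_entropy d id x0) 0.
  by left; apply/eqP; rewrite eq_le h0 coarse_entropy_ge0.
right; move: hpos; rewrite coarse_entropyE => /ereal_sup_gt [_ [delta _ <-] hdelta].
set de := Num.max delta 0%R.
have de0 : (0 <= de)%R by rewrite le_max lexx orbT.
apply: (@ereal_nat_multiples_pinfty _ (growth_inf d x0 id de)).
  by apply: lt_le_trans hdelta _; apply: growth_inf_nondecreasing; rewrite le_max lexx.
move=> k; apply: (@le_trans _ _ (growth_inf d x0 id (k.*2%:R * de))).
  2: by apply: ereal_sup_ubound; exists (k.*2%:R * de)%R.
case: k => [|k]; first by rewrite mul0e growth_inf_ge0 // mulr_ge0.
by have := @growth_inf_id_scale k.+1.*2 de isT de0; rewrite -muln2 natrM mulfK.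
Qed.

Section IsometricEmbedding.
Variable f : X -> X.
Hypothesis hf : isometric_embedding d f.

Lemma growth_id_le_iso Rs delta : growth d id Rs delta x0 <= growth d f Rs delta x0.
Proof. by apply: le_growth_of_separated => n K; apply: has_separated_set_id_iso. Qed.

Lemma growth_iso_le_id Rs delta : (0 < Rs)%R -> (d x0 (f x0) <= delta)%R ->
  (2^-1)%:E * growth d f Rs delta x0 <= growth d id Rs delta x0.
Proof.
move=> Rs0 hx0; have de0 : (0 <= delta)%R by apply: le_trans hx0; case: hd.
apply: (le_growth_reindex _ (g := fun m => (m + m)%N)) => // N; exists N => m hm.
split; first by rewrite (leq_trans hm) ?leq_addl.
split=> [|K]; last exact: has_separated_set_iso_id.
by rewrite -invfM natrD mulr2n mulrDl !mul1r.
Qed.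

Lemma coarse_entropy_id_le_iso : coarse_entropy d id x0 <= coarse_entropy d f x0.
Proof.
rewrite !coarse_entropyE; apply: ge_ereal_sup => _ [delta _ <-].
apply: le_ereal_sup_tmp; exists (growth_inf d x0 f delta); first by exists delta.
apply: le_growth_inf => Rs _.
exact: le_trans (growth_inf_le d x0 id Rs delta) (growth_id_le_iso Rs delta).
Qed.

Lemma coarse_entropy_iso_le_id :
  (2^-1)%:E * coarse_entropy d f x0 <= coarse_entropy d id x0.
Proof.
rewrite !coarse_entropyE -ereal_sup_pZl ?invr_gt0 //.
apply: ge_ereal_sup => _ [_ [delta _ <-] <-].
set de := Num.max delta (d x0 (f x0)).
apply: (@le_trans _ _ (growth_inf d x0 id de)); last by apply: ereal_sup_ubound; exists de.
apply: (@le_trans _ _ ((2^-1)%:E * growth_inf d x0 f de)).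
  apply: lee_wpmul2l; first by rewrite lee_fin invr_ge0.
  by apply: growth_inf_nondecreasing; rewrite le_max lexx.
apply: le_growth_inf => Rs Rs0.
apply: le_trans (growth_iso_le_id Rs0 _); last by rewrite le_max lexx orbT.
by apply: lee_wpmul2l; [rewrite lee_fin invr_ge0 | apply: growth_inf_le].
Qed.

Lemma coarse_entropy_iso_dichotomy :
  coarse_entropy d f x0 = 0 \/ coarse_entropy d f x0 = +oo.
Proof.
have h0 := coarse_entropy_ge0 hd x0 f.
case: coarse_entropy_id_dichotomy => hid; [left | right].
  apply/eqP; rewrite eq_le h0 andbT -(@lee_pmul2l _ (2^-1)%:E) ?lte_fin ?invr_gt0 //.
  by rewrite mule0 -hid coarse_entropy_iso_le_id.
by apply/eqP; rewrite -leye_eq -hid coarse_entropy_id_le_iso.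
Qed.

End IsometricEmbedding.
End Dichotomy.

Local Open Scope ereal_scope.

Theorem mainTheorem5 (R : realType) (X : Type) (d : X -> X -> R) :
  is_metric d ->
  (forall x0 : X,
     coarse_entropy_space d x0 = 0 \/ coarse_entropy_space d x0 = +oo) /\
  (forall (f : X -> X) (x0 : X), isometric_embedding d f ->
     coarse_entropy d f x0 = 0 \/ coarse_entropy d f x0 = +oo).
Proof.
move=> hd; split=> [x0 | f x0 hf].
  exact: coarse_entropy_id_dichotomy.
exact: coarse_entropy_iso_dichotomy.
Qed.
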